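(* Call a permutation $g$ of the set $\omega$ of natural numbers local if for every $i\in\omega$ there exists $j>i$ in $\omega$ such that $g$ carries $\{0,\ldots,j-1\}$ to itself. Then every permutation $f$ of $\omega$ is a product $gh$ of two local permutations $g,h$. *)

From Stdlib Require Import Arith.

Definition is_perm (f : nat -> nat) : Prop :=
  (forall x y, f x = f y -> x = y) /\ (forall y, exists x, f x = y).

Definition carries_initial (g : nat -> nat) (j : nat) : Prop :=
  (forall x, x < j -> g x < j) /\ (forall y, y < j -> exists x, x < j /\ g x = y).

Definition local_perm (g : nat -> nat) : Prop :=
  is_perm g /\ forall i, exists j, i < j /\ carries_initial g j.

From Stdlib Require Import Arith Lia IndefiniteDescription.

(* Cut omega at 0 = A_0 < B_0 < A_1 < B_1 < ... chosen so that f maps [0, A_k) into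
   [0, B_k) and f^-1 maps [0, B_k) into [0, A_(k+1)).  Then exactly B_k - A_k points
   x of the block [A_k, A_(k+1)) have f x < B_k, and h (block_sort) permutes each block so that
   these points fill [A_k, B_k).  Thus h fixes every [0, A_k) setwise, and as
   h x < B_k <-> f x < B_k for all x, g = f h^-1 fixes every [0, B_k) setwise. *)

Lemma is_perm_of_inverse (p q : nat -> nat) :
  (forall x, q (p x) = x) -> (forall y, p (q y) = y) -> is_perm p.
Proof.
  intros qp pq. split.
  - intros x y E. rewrite <- (qp x), <- (qp y), E. reflexivity.
  - intros y. exists (q y). apply pq.
Qed.

Lemma is_perm_inverse (p : nat -> nat) :
  is_perm p -> exists q, (forall x, q (p x) = x) /\ (forall y, p (q y) = y).
Proof.
  intros [p_inj p_surj].
  destruct (functional_choice (fun y x => p x = y) p_surj) as [q pq].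
  exists q. split; [intros x; apply p_inj; rewrite pq|]; auto.
Qed.

Lemma carries_initial_of_iff (p : nat -> nat) (j : nat) :
  is_perm p -> (forall x, p x < j <-> x < j) -> carries_initial p j.
Proof.
  intros [_ p_surj] Hj. split.
  - intros x Hx. apply Hj, Hx.
  - intros y Hy. destruct (p_surj y) as [x <-]. exists x. split; [apply Hj|]; auto.
Qed.

Section Counting.

Variable P : nat -> bool.

Fixpoint count_upto (n : nat) : nat :=
  match n with 0 => 0 | S n => count_upto n + (if P n then 1 else 0) end.

Lemma count_upto_mono m n : m <= n -> count_upto m <= count_upto n.
Proof. induction 1; simpl; [|destruct (P m)]; lia. Qed.

Lemma count_upto_lt x y : P x = true -> x < y -> count_upto x < count_upto y.
Proof.
  intros Px Hxy. pose proof (count_upto_mono (S x) y Hxy) as H.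
  simpl in H. rewrite Px in H. lia.
Qed.

Lemma count_upto_inj x y :
  P x = true -> P y = true -> count_upto x = count_upto y -> x = y.
Proof.
  intros Px Py E. destruct (Nat.lt_total x y) as [L|[L|L]]; auto.
  - pose proof (count_upto_lt x y Px L). lia.
  - pose proof (count_upto_lt y x Py L). lia.
Qed.

Lemma count_upto_reach v n :
  v < count_upto n -> exists x, x < n /\ P x = true /\ count_upto x = v.
Proof.
  induction n; simpl; intros Hv; [lia|].
  destruct (Nat.lt_ge_cases v (count_upto n)) as [L|L].
  - destruct (IHn L) as (x & ? & ? & ?). exists x. auto.
  - destruct (P n) eqn:Pn; [|lia]. exists n. split; [|split]; auto; lia.
Qed.

Lemma count_upto_all a n : (forall z, z < a -> P z = true) -> n <= a -> count_upto n = n.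
Proof.
  intros HP. induction n; simpl; intros Hn; auto.
  rewrite HP, IHn by lia. lia.
Qed.

End Counting.

Lemma count_upto_negb (P : nat -> bool) n :
  count_upto P n + count_upto (fun z => negb (P z)) n = n.
Proof. induction n; simpl; [|destruct (P n); simpl]; lia. Qed.

Lemma count_upto_eqb m n : m < n -> count_upto (Nat.eqb m) n = 1.
Proof.
  assert (Below : forall k, k <= m -> count_upto (Nat.eqb m) k = 0).
  { induction k; simpl; intros Hk; auto. destruct (Nat.eqb_spec m k); lia. }
  induction 1; simpl.
  - rewrite Nat.eqb_refl, Below; auto.
  - rewrite IHle. destruct (Nat.eqb_spec m m0); lia.
Qed.

Lemma count_upto_preimage (f finv : nat -> nat) (b n : nat) :
  (forall x, finv (f x) = x) -> (forall y, f (finv y) = y) ->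
  (forall y, y < b -> finv y < n) -> count_upto (fun z => f z <? b) n = b.
Proof.
  intros finv_f f_finv. induction b; intros Hb.
  - clear Hb. induction n; simpl; auto. rewrite IHn. destruct (Nat.ltb_spec (f n) 0); lia.
  - assert (Split : count_upto (fun z => f z <? S b) n =
                    count_upto (fun z => f z <? b) n + count_upto (Nat.eqb (finv b)) n).
    { clear Hb IHb. induction n; simpl; auto. rewrite IHn.
      destruct (Nat.eqb_spec (finv b) n) as [<-|Hn]; rewrite ?f_finv.
      - destruct (Nat.ltb_spec b (S b)), (Nat.ltb_spec b b); lia.
      - assert (f n <> b) by (intros <-; auto).
        destruct (Nat.ltb_spec (f n) (S b)), (Nat.ltb_spec (f n) b); lia. }
    rewrite Split, IHb, count_upto_eqb; auto; lia.
Qed.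

(* The position of x once [0, c) is stably partitioned into the points satisfying P
   followed by the others. *)
Definition partition_index (P : nat -> bool) (c x : nat) : nat :=
  if P x then count_upto P x
  else count_upto P c + count_upto (fun z => negb (P z)) x.

Section PartitionIndex.

Variables (P : nat -> bool) (c : nat).

Lemma partition_index_lt x : x < c -> partition_index P c x < c.
Proof.
  intros Hx. unfold partition_index. pose proof (count_upto_negb P c).
  destruct (P x) eqn:Px.
  - pose proof (count_upto_lt P x c Px Hx). lia.
  - assert (nPx : negb (P x) = true) by now rewrite Px.
    pose proof (count_upto_lt (fun z => negb (P z)) x c nPx Hx). lia.
Qed.

Lemma partition_index_lt_count x :
  x < c -> partition_index P c x < count_upto P c <-> P x = true.
Proof.
  intros Hx. unfold partition_index. destruct (P x) eqn:Px.
  - pose proof (count_upto_lt P x c Px Hx). tauto.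
  - split; [lia|discriminate].
Qed.

Lemma partition_index_inj x y : x < c -> y < c ->
  partition_index P c x = partition_index P c y -> x = y.
Proof.
  intros Hx Hy E. unfold partition_index in E.
  destruct (P x) eqn:Px, (P y) eqn:Py.
  - apply (count_upto_inj P); auto.
  - pose proof (count_upto_lt P x c Px Hx). lia.
  - pose proof (count_upto_lt P y c Py Hy). lia.
  - apply (count_upto_inj (fun z => negb (P z))); [rewrite Px|rewrite Py|]; auto; lia.
Qed.

Lemma partition_index_surj y : y < c -> exists x, x < c /\ partition_index P c x = y.
Proof.
  intros Hy. unfold partition_index. pose proof (count_upto_negb P c).
  destruct (Nat.lt_ge_cases y (count_upto P c)) as [L|L].
  - destruct (count_upto_reach P y c L) as (x & Hx & Px & Ex).
    exists x. rewrite Px. auto.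
  - destruct (count_upto_reach (fun z => negb (P z)) (y - count_upto P c) c)
      as (x & Hx & nPx & Ex); [lia|].
    exists x. split; auto. destruct (P x); simpl in nPx; [discriminate|lia].
Qed.

Lemma partition_index_id a x :
  (forall z, z < a -> P z = true) -> x < a -> partition_index P c x = x.
Proof.
  intros HP Hx. unfold partition_index. rewrite HP by auto.
  apply (count_upto_all P a); auto; lia.
Qed.

Lemma partition_index_ge a x :
  (forall z, z < a -> P z = true) -> a <= x < c -> a <= partition_index P c x.
Proof.
  intros HP Hx. destruct (Nat.lt_ge_cases (partition_index P c x) a) as [L|L]; auto.
  pose proof (partition_index_id a _ HP L) as Fix.
  apply partition_index_inj in Fix; lia.
Qed.

End PartitionIndex.

Section Blocks.

Variable a : nat -> nat.
Hypothesis a_incr : forall n, a n < a (S n).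

Fixpoint block_index (x : nat) : nat :=
  match x with
  | 0 => 0
  | S x => let k := block_index x in if a (S k) <=? S x then S k else k
  end.

Lemma incr_le j k : j <= k -> a j <= a k.
Proof. induction 1; [|specialize (a_incr m)]; lia. Qed.

Lemma le_incr k : k <= a k.
Proof. induction k; [|specialize (a_incr k)]; lia. Qed.

Hypothesis a_0 : a 0 = 0.

Lemma block_index_spec x : a (block_index x) <= x < a (S (block_index x)).
Proof.
  induction x as [|x IH]; simpl.
  - specialize (a_incr 0). lia.
  - destruct (Nat.leb_spec (a (S (block_index x))) (S x)); [|lia].
    specialize (a_incr (S (block_index x))). lia.
Qed.

Lemma block_index_eq k x : a k <= x < a (S k) -> block_index x = k.
Proof.
  intros Hk. pose proof (block_index_spec x).
  destruct (Nat.lt_total (block_index x) k) as [L|[L|L]]; auto.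
  - pose proof (incr_le _ _ L). lia.
  - pose proof (incr_le _ _ L). lia.
Qed.

Lemma lt_block_index x k : x < a k <-> block_index x < k.
Proof.
  pose proof (block_index_spec x). split; intros Hk.
  - destruct (Nat.lt_ge_cases (block_index x) k) as [L|L]; auto.
    pose proof (incr_le _ _ L). lia.
  - pose proof (incr_le _ _ Hk). lia.
Qed.

End Blocks.

Fixpoint image_bound (F : nat -> nat) (n : nat) : nat :=
  match n with 0 => 0 | S n => Nat.max (image_bound F n) (S (F n)) end.

Lemma image_bound_spec F n x : x < n -> F x < image_bound F n.
Proof.
  induction n; simpl; intros Hx; [lia|].
  destruct (Nat.eq_dec x n) as [->|]; [lia|]. specialize (IHn ltac:(lia)). lia.
Qed.

Definition next_cut (F : nat -> nat) (n : nat) : nat := Nat.max (S n) (image_bound F n).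

Lemma lt_next_cut F n : n < next_cut F n.
Proof. unfold next_cut. lia. Qed.

Lemma image_lt_next_cut F n x : x < n -> F x < next_cut F n.
Proof. intros Hx. pose proof (image_bound_spec F n x Hx). unfold next_cut. lia. Qed.

Section Factorization.

Variables f finv : nat -> nat.
Hypothesis finv_f : forall x, finv (f x) = x.
Hypothesis f_finv : forall y, f (finv y) = y.

Fixpoint cutA (k : nat) : nat :=
  match k with 0 => 0 | S k => next_cut finv (next_cut f (cutA k)) end.

Definition cutB (k : nat) : nat := next_cut f (cutA k).

Lemma cutA_lt_cutB k : cutA k < cutB k.
Proof. apply lt_next_cut. Qed.

Lemma cutB_lt_cutA k : cutB k < cutA (S k).
Proof. apply lt_next_cut. Qed.

Lemma cutA_incr k : cutA k < cutA (S k).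
Proof. pose proof (cutA_lt_cutB k). pose proof (cutB_lt_cutA k). lia. Qed.

Lemma f_lt_cutB k x : x < cutA k -> f x < cutB k.
Proof. apply image_lt_next_cut. Qed.

Lemma finv_lt_cutA k y : y < cutB k -> finv y < cutA (S k).
Proof. apply image_lt_next_cut. Qed.

Notation block := (block_index cutA).

Lemma block_spec x : cutA (block x) <= x < cutA (S (block x)).
Proof. apply block_index_spec; auto using cutA_incr. Qed.

Definition f_below (k z : nat) : bool := f z <? cutB k.

Lemma count_f_below k : count_upto (f_below k) (cutA (S k)) = cutB k.
Proof. apply (count_upto_preimage f finv); auto using finv_lt_cutA. Qed.

Lemma f_below_low k z : z < cutA k -> f_below k z = true.
Proof. intros Hz. apply Nat.ltb_lt, f_lt_cutB, Hz. Qed.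

Definition block_sort (x : nat) : nat :=
  partition_index (f_below (block x)) (cutA (S (block x))) x.

Lemma block_sort_in_block x : cutA (block x) <= block_sort x < cutA (S (block x)).
Proof.
  pose proof (block_spec x). unfold block_sort. split.
  - apply partition_index_ge; [apply f_below_low|lia].
  - apply partition_index_lt. lia.
Qed.

Lemma block_block_sort x : block (block_sort x) = block x.
Proof. apply block_index_eq; auto using cutA_incr, block_sort_in_block. Qed.

Lemma block_sort_perm : is_perm block_sort.
Proof.
  split.
  - intros x y E.
    assert (Exy : block x = block y)
      by now rewrite <- (block_block_sort x), <- (block_block_sort y), E.
    pose proof (block_spec x). pose proof (block_spec y).
    unfold block_sort in E. rewrite Exy in *. apply partition_index_inj in E; lia.
  - intros y. pose proof (block_spec y) as By. set (k := block y) in By.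
    destruct (partition_index_surj (f_below k) (cutA (S k)) y) as (x & Hx & Ey); [lia|].
    destruct (Nat.lt_ge_cases x (cutA k)) as [L|L].
    + rewrite (partition_index_id _ _ _ x (f_below_low k) L) in Ey. lia.
    + exists x. unfold block_sort.
      rewrite (block_index_eq cutA cutA_incr eq_refl k x); auto; lia.
Qed.

Lemma block_sort_lt_cutA k x : block_sort x < cutA k <-> x < cutA k.
Proof.
  rewrite !(lt_block_index cutA cutA_incr eq_refl), block_block_sort. reflexivity.
Qed.

Lemma block_sort_lt_cutB k x : block_sort x < cutB k <-> f x < cutB k.
Proof.
  pose proof (block_sort_in_block x). pose proof (block_spec x).
  destruct (Nat.lt_total (block x) k) as [L|[<-|L]].
  - pose proof (incr_le cutA cutA_incr _ _ L). pose proof (cutA_lt_cutB k).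
    split; intros; [apply f_lt_cutB|]; lia.
  - rewrite <- (count_f_below (block x)) at 1. unfold block_sort.
    rewrite partition_index_lt_count by lia. apply Nat.ltb_lt.
  - pose proof (incr_le cutA cutA_incr _ _ L). pose proof (cutB_lt_cutA k).
    split; intros Hf; [lia|].
    apply finv_lt_cutA in Hf. rewrite finv_f in Hf. lia.
Qed.

Lemma local_block_sort : local_perm block_sort.
Proof.
  split; [apply block_sort_perm|]. intros i. exists (cutA (S i)). split.
  - pose proof (le_incr cutA cutA_incr i). pose proof (cutA_incr i). lia.
  - apply carries_initial_of_iff; [apply block_sort_perm|apply block_sort_lt_cutA].
Qed.

Lemma local_f_comp_inverse (sinv : nat -> nat) :
  (forall x, sinv (block_sort x) = x) -> (forall y, block_sort (sinv y) = y) ->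
  local_perm (fun y => f (sinv y)).
Proof.
  intros sinv_s s_sinv.
  assert (g_perm : is_perm (fun y => f (sinv y))).
  { apply (is_perm_of_inverse _ (fun x => block_sort (finv x))); intros.
    - rewrite finv_f. auto.
    - rewrite sinv_s. auto. }
  split; [exact g_perm|]. intros i. exists (cutB i). split.
  - pose proof (le_incr cutA cutA_incr i). pose proof (cutA_lt_cutB i). lia.
  - apply carries_initial_of_iff; auto. intros y.
    rewrite <- block_sort_lt_cutB, s_sinv. reflexivity.
Qed.

Lemma local_factorization :
  exists g h : nat -> nat, local_perm g /\ local_perm h /\ forall x, f x = g (h x).
Proof.
  destruct (is_perm_inverse block_sort block_sort_perm) as (sinv & sinv_s & s_sinv).
  exists (fun y => f (sinv y)), block_sort. split; [|split].
  - apply local_f_comp_inverse; auto.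
  - apply local_block_sort.
  - intros x. rewrite sinv_s. reflexivity.
Qed.

End Factorization.

Theorem lemma5p1 (f : nat -> nat) (hf : is_perm f) :
  exists g h : nat -> nat, local_perm g /\ local_perm h /\ forall x, f x = g (h x).
Proof.
  destruct (is_perm_inverse f hf) as (finv & finv_f & f_finv).
  exact (local_factorization f finv finv_f f_finv).
Qed.
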